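(* Let $\mathcal R_f,\mathcal R_g$ be constructible Reeb graphs. Then $d_{FD}(\mathcal R_f,\mathcal R_g)=\infty$ if and only if $\mathcal R_f$ and $\mathcal R_g$ have different numbers of path-connected components.
   Context: Reeb graph $\mathcal R_f=(\mathbb X_f,\tilde f)$: quotient of a scalar field identifying points in the same path component of a level set; constructible = built from finitely many compact locally path-connected slices over critical values (a finite graph, possibly disconnected). $d_f(u,v)=\min_{\pi:u\to v}(\max_\pi\tilde f-\min_\pi\tilde f)$ over continuous paths, with $d_f(u,v)=\infty$ when no path exists. $d_{FD}(\mathcal R_f,\mathcal R_g)=\inf_{\Phi,\Psi}\max\{D(\Phi,\Psi),\|\tilde f-\tilde g\circ\Phi\|_\infty,\|\tilde f\circ\Psi-\tilde g\|_\infty\}$ over continuous $\Phi:\mathcal R_f\to\mathcal R_g,\Psi:\mathcal R_g\to\mathcal R_f$, where $D(\Phi,\Psi)=\sup\tfrac12|d_f(x,x')-d_g(y,y')|$ over pairs in $\{(x,\Phi(x))\}\cup\{(\Psi(y),y)\}$. *)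

From HB Require Import structures.
From mathcomp Require Import all_boot all_order all_algebra generic_quotient.
From mathcomp Require Import all_classical all_reals all_analysis.
Set Implicit Arguments. Unset Strict Implicit. Unset Printing Implicit Defensive.
Import Order.TTheory GRing.Theory Num.Theory.
Import numFieldNormedType.Exports.
Local Open Scope classical_set_scope.
Local Open Scope ring_scope.

(* Geometric realization of a finite "Reeb graph datum":                    *)
(*   finitely many vertices v : V with heights h v, finitely many edges      *)
(*   e : E going from src e to tgt e with h (src e) < h (tgt e)             *)
(*   (multi-edges allowed, graph possibly disconnected).                    *)
(* The realization is the quotient of the disjoint union of copies of R,    *)
(* one per vertex and one per edge, where the copy of a vertex is collapsed *)
(* to that vertex and the copy of an edge e is collapsed onto the segment    *)
(* [h (src e), h (tgt e)] (the two rays being collapsed to the endpoint     *)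
(* vertices).  Collapsing the rays is a retraction, hence a quotient map,   *)
(* so this is exactly the usual quotient-topology realization.              *)
Section Realization.
Variables (R : realType) (V E : finType) (h : V -> R) (src tgt : E -> V).

Definition rg_base := {i : (V + E)%type & R}.

Definition rg_canon (x : rg_base) : (V + (E * R))%type :=
  let: existT i t := x in
  match i with
  | inl v => inl v
  | inr e => if t <= h (src e) then inl (src e)
             else if h (tgt e) <= t then inl (tgt e)
             else inr (e, t)
  end.

Definition rg_rel : rel rg_base := fun x y => rg_canon x == rg_canon y.

Lemma rg_rel_refl : reflexive rg_rel. Proof. by move=> x; rewrite /rg_rel. Qed.
Lemma rg_rel_sym : symmetric rg_rel.
Proof. by move=> x y; rewrite /rg_rel eq_sym. Qed.
Lemma rg_rel_trans : transitive rg_rel.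
Proof. by move=> y x z; rewrite /rg_rel => /eqP -> /eqP ->. Qed.

Canonical rg_equiv := EquivRel rg_rel rg_rel_refl rg_rel_sym rg_rel_trans.

Local Open Scope quotient_scope.
Notation realization := (quotient_topology {eq_quot rg_equiv}).

Definition rg_height (p : (V + (E * R))%type) : R :=
  match p with inl v => h v | inr (_, t) => t end.

Definition realization_fun (q : realization) : R :=
  rg_height (rg_canon (repr q)).
End Realization.

Definition fun_homeomorphic {R : realType} {X Y : topologicalType}
  (f : X -> R) (g : Y -> R) : Prop :=
  exists (phi : X -> Y) (psi : Y -> X),
    [/\ continuous phi, continuous psi, cancel phi psi, cancel psi phi
      & forall x, f x = g (phi x)].

Definition constructible_reeb {R : realType} {X : topologicalType}
  (f : X -> R) : Prop :=
  exists (V E : finType) (h : V -> R) (src tgt : E -> V),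
    (forall e, h (src e) < h (tgt e)) /\
    fun_homeomorphic f (@realization_fun R V E h src tgt).

Definition is_path {R : realType} {X : topologicalType} (p : R -> X) (u v : X) :=
  [/\ {within `[0, 1], continuous p}, p 0 = u & p 1 = v].

Definition path_conn {R : realType} (X : topologicalType) (u v : X) : Prop :=
  exists p : R -> X, is_path p u v.

Definition path_components (R : realType) (X : topologicalType) : set (set X) :=
  [set [set y | @path_conn R X x y] | x in [set: X]].

Definition path_height {R : realType} {X : topologicalType}
  (f : X -> R) (p : R -> X) : R :=
  sup [set f (p t) | t in `[0, 1]] - inf [set f (p t) | t in `[0, 1]].

Local Open Scope ereal_scope.

(* d_f(u,v), = +oo when no path exists (inf of the empty set) *)
Definition reeb_dist {R : realType} {X : topologicalType} (f : X -> R) (u v : X)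
  : \bar R :=
  ereal_inf [set (path_height f p)%:E | p in [set p : R -> X | is_path p u v]].

(* |a - b| on \bar R with the convention |+oo - +oo| = 0 *)
Definition eabsdiff {R : realType} (a b : \bar R) : \bar R :=
  if (a == +oo) && (b == +oo) then 0 else `|a - b|.

Definition distortion {R : realType} {X Y : topologicalType}
  (f : X -> R) (g : Y -> R) (Phi : X -> Y) (Psi : Y -> X) : \bar R :=
  let G := [set xy : X * Y | xy.2 = Phi xy.1 \/ xy.1 = Psi xy.2] in
  ereal_sup [set (2^-1)%:E * eabsdiff (reeb_dist f a.1.1 a.2.1)
                                      (reeb_dist g a.1.2 a.2.2)
            | a in [set a : (X * Y) * (X * Y) | G a.1 /\ G a.2]].

Definition sup_dist {R : realType} {Z : Type} (u v : Z -> R) : \bar R :=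
  ereal_sup [set `|u z - v z|%:E | z in [set: Z]].

Definition d_FD {R : realType} {X Y : topologicalType}
  (f : X -> R) (g : Y -> R) : \bar R :=
  ereal_inf [set maxe (distortion f g PP.1 PP.2)
                      (maxe (sup_dist f (g \o PP.1)) (sup_dist (f \o PP.2) g))
            | PP in [set PP : (X -> Y) * (Y -> X) |
                     continuous PP.1 /\ continuous PP.2]].

(* A
   constructible Reeb graph is bounded, so d_f (u, v) is finite, indeed at
   most twice the bound, exactly when u and v lie in the same path component,
   and +oo otherwise.  Hence a pair (Phi, Psi) of finite distortion must reflect
   path-connectedness, which makes both maps induce injections between the sets
   of path components; Cantor-Bernstein then gives a bijection.  Conversely,
   given a bijection of path components, sending each point to a chosen
   representative of the corresponding component yields maps that are constant
   on path components, hence continuous (the realization is glued from copies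
   of R, each path-connected), and all three terms of d_FD are bounded in terms
   of the bounds of f and g. *)
From HB Require Import structures.
From mathcomp Require Import all_boot all_order all_algebra generic_quotient.
From mathcomp Require Import all_classical all_reals all_analysis.
From mathcomp Require Import lra.
Import Order.TTheory GRing.Theory Num.Theory.
Import numFieldNormedType.Exports.
Local Open Scope classical_set_scope.
Local Open Scope ring_scope.

Lemma continuous_affine (R : realType) (a b : R) : continuous (fun t : R => a * t + b).
Proof.
move=> x; apply: (@continuousD _ _ _ (fun t => a * t) (fun=> b)); last exact: cst_continuous.
by apply: (@continuousM _ _ (fun=> a) id); [exact: cst_continuous | exact: cvg_id].
Qed.

Section PathConnected.
Context {R : realType} {X : topologicalType}.
Local Notation path_conn := (@path_conn R _).

Lemma continuous_within_comp (A B : set R) (phi : R -> R) (p : R -> X) :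
  continuous phi -> {homo phi : t / A t >-> B t} ->
  {within B, continuous p} -> {within A, continuous (p \o phi)}.
Proof.
move=> cphi AB /subspace_continuousP cp; apply/subspace_continuousP => x Ax.
have phi_within : phi @ within A (nbhs x) --> within B (nbhs (phi x)).
  move=> S hS.
  have BS : nbhs x (fun z => B (phi z) -> S (phi z)) := cphi x _ hS.
  change (nbhs x (fun z => A z -> S (phi z))).
  by apply: filterS BS => z BS Az; apply/BS/AB.
exact: (@cvg_comp _ _ _ phi (from_subspace B p) _ _ _ phi_within (cp _ (AB _ Ax))).
Qed.

Lemma path_conn_refl (u : X) : path_conn u u.
Proof.
by exists (fun=> u); split => //; apply: continuous_subspaceT; exact: cst_continuous.
Qed.

Lemma path_conn_sym {u v : X} : path_conn u v -> path_conn v u.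
Proof.
move=> [p [cp p0 p1]]; exists (p \o (fun t => -1 * t + 1)); split.
- apply: continuous_within_comp cp; first exact: continuous_affine.
  by move=> t; rewrite /= !in_itv /= => /andP[t0 t1]; apply/andP; split; lra.
- by rewrite /= mulr0 add0r.
- by rewrite /= mulN1r addNr.
Qed.

Lemma path_conn_trans {u v w : X} : path_conn u v -> path_conn v w -> path_conn u w.
Proof.
have itv01_split : `[0, 1]%classic = `[0, 2^-1]%classic `|` `[2^-1, 1]%classic :> set R.
  apply/seteqP; split => t /=; rewrite !in_itv /=.
    move=> /andP[t0 t1]; have [ht|ht] := lerP t (2^-1 : R); [left|right].
      by apply/andP; split; lra.
    by apply/andP; split; lra.
  by case=> /andP[t0 t1]; apply/andP; split; lra.
have e1 : 2 * 1 + -1 = 1 :> R by lra.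
have e2 : 2 * 2^-1 + 0 = 1 :> R by lra.
have e3 : 2 * 2^-1 + -1 = 0 :> R by lra.
move=> [p [cp p0 p1]] [q [cq q0 q1]].
exists (fun t => if t <= 2^-1 then p (2 * t + 0) else q (2 * t + -1)); split.
- rewrite itv01_split.
  apply: withinU_continuous; [exact: interval_closed | exact: interval_closed | |].
  + apply: (@subspace_eq_continuous _ _ _ (p \o (fun t => 2 * t + 0))).
      by move=> t; rewrite inE /= in_itv /= => /andP[t0 t1]; rewrite /from_subspace ifT.
    apply: continuous_within_comp cp; first exact: continuous_affine.
    by move=> t; rewrite /= !in_itv /= => /andP[t0 t1]; apply/andP; split; lra.
  + apply: (@subspace_eq_continuous _ _ _ (q \o (fun t => 2 * t + -1))).
      move=> t; rewrite inE /= in_itv /= => /andP[t0 t1].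
      rewrite /from_subspace; case: ifPn => // ht.
      have -> : t = 2^-1 by apply/eqP; rewrite eq_le ht t0.
      by rewrite /= e2 e3 p1 q0.
    apply: continuous_within_comp cq; first exact: continuous_affine.
    by move=> t; rewrite /= !in_itv /= => /andP[t0 t1]; apply/andP; split; lra.
- by rewrite ifT ?mulr0 ?addr0 //; lra.
- by rewrite ifF ?e1 //; apply/negbTE; rewrite -ltNge; lra.
Qed.

Lemma path_conn_map {Y : topologicalType} {G : X -> Y} {u v : X} :
  continuous G -> path_conn u v -> path_conn (G u) (G v).
Proof.
move=> cG [p [cp p0 p1]]; exists (G \o p); split; rewrite /= ?p0 ?p1 //.
by move=> t; exact: (@continuous_comp (subspace _) X Y (from_subspace _ p) G t (cp t) (cG _)).
Qed.
End PathConnected.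

Section Realization.
Context {R : realType} (V E : finType) (h : V -> R) (src tgt : E -> V).
Local Open Scope quotient_scope.
Local Notation Q := (quotient_topology {eq_quot (rg_equiv h src tgt)}).
Local Notation path_conn := (@path_conn R _).

Lemma realization_fun_le (q : Q) :
  `|realization_fun q| <= \big[Num.max/0]_v `|h v|.
Proof.
rewrite /realization_fun; case: (repr q) => -[v|e] t /=; first exact: le_bigmax.
case: ifPn => hs /=; first exact: le_bigmax.
case: ifPn => ht /=; first exact: le_bigmax.
have := le_bigmax 0 (fun v => `|h v|) (src e).
have := le_bigmax 0 (fun v => `|h v|) (tgt e).
rewrite -ltNge in hs; rewrite -ltNge in ht.
move: hs ht; set B := \big[_/_]_(_ | _) _.
rewrite /= !ler_norml => hs ht /andP[a1 a2] /andP[b1 b2].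
by apply/andP; split; lra.
Qed.

Lemma realization_continuous_path_const (Z : topologicalType) (F : Q -> Z) :
  (forall q q', path_conn q q' -> F q = F q') -> continuous F.
Proof.
move=> hF; apply/quotient_continuous.
have copy_path_conn i (s t : R) :
    path_conn (\pi_Q (existT _ i s)) (\pi_Q (existT _ i t)).
  exists (fun r => \pi_Q (existT (fun=> R) i ((t - s) * r + s))); split.
  - apply: continuous_subspaceT => r.
    apply: (@continuous_comp _ _ _ (fun r => existT (fun=> R) i ((t - s) * r + s)));
      last exact: pi_continuous.
    apply: (@continuous_comp _ _ _ (fun r => (t - s) * r + s));
      [exact: continuous_affine | exact: existT_continuous].
  - by rewrite mulr0 add0r.
  - by rewrite mulr1 subrK.
have -> : F \o \pi_Q =
    unstable.sigT_fun (fun i (_ : R) => F (\pi_Q (existT (fun=> R) i 0))).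
  by apply: funext => -[i t] /=; apply/hF/copy_path_conn.
by apply: sigT_continuous => i; exact: cst_continuous.
Qed.
End Realization.

Section ConstructibleReeb.
Context {R : realType} {X : topologicalType} {f : X -> R}.
Hypothesis cf : constructible_reeb f.
Local Notation path_conn := (@path_conn R _).

Lemma constructible_reeb_bounded : exists B, forall x, `|f x| <= B.
Proof.
have [V [E [h [src [tgt [_ [phi [psi [_ _ _ _ fE]]]]]]]]] := cf.
exists (\big[Num.max/0]_v `|h v|) => x; rewrite fE; exact: realization_fun_le.
Qed.

Lemma constructible_reeb_continuous_path_const {Z : topologicalType} {F : X -> Z} :
  (forall x x', path_conn x x' -> F x = F x') -> continuous F.
Proof.
have [V [E [h [src [tgt [_ [phi [psi [cphi cpsi phiK _ _]]]]]]]]] := cf.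
move=> hF; have -> : F = (F \o psi) \o phi by apply: funext => x; rewrite /= phiK.
move=> x; apply: continuous_comp; first exact: cphi.
apply: realization_continuous_path_const => q q' qq'.
exact/hF/path_conn_map.
Qed.
End ConstructibleReeb.

Section ReebDist.
Context {R : realType} {X : topologicalType} {f : X -> R} {B : R}.
Hypothesis f_le : forall x, `|f x| <= B.
Local Notation path_conn := (@path_conn R _).

Lemma path_height_bounds (p : R -> X) : 0 <= path_height f p <= 2 * B.
Proof.
set S := [set f (p t) | t in `[0, 1]%classic].
have S0 : S (f (p 0)) by exists 0 => //=; rewrite in_itv /= lexx ler01.
have ubS : ubound S B.
  by move=> _ [t _ <-]; have := f_le (p t); rewrite ler_norml => /andP[].
have lbS : lbound S (- B).
  by move=> _ [t _ <-]; have := f_le (p t); rewrite ler_norml => /andP[].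
have supS : sup S <= B by apply: ge_sup => //; exists (f (p 0)).
have infS : - B <= inf S by apply: lb_le_inf => //; exists (f (p 0)).
have le_supS : f (p 0) <= sup S.
  by apply: sup_upper_bound => //; split; [exists (f (p 0)) | exists B].
have ge_infS : inf S <= f (p 0) by apply: ge_inf => //; exists (- B).
by rewrite /path_height -/S; apply/andP; split; lra.
Qed.

Lemma reeb_dist_path_conn {u v : X} : path_conn u v ->
  exists2 r, reeb_dist f u v = r%:E & 0 <= r <= 2 * B.
Proof.
move=> [p pathp].
have d_ge0 : (0%:E <= reeb_dist f u v)%E.
  apply/ereal_infP => _ [q _ <-]; rewrite lee_fin.
  by have /andP[] := path_height_bounds q.
have d_le : (reeb_dist f u v <= (path_height f p)%:E)%E.
  by apply: ereal_inf_lbound; exists p.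
have /andP[_ hp_le] := path_height_bounds p.
have d_fin : reeb_dist f u v \is a fin_num.
  by rewrite ge0_fin_numE //; apply: le_lt_trans d_le _; exact: ltry.
exists (fine (reeb_dist f u v)); first by rewrite fineK.
apply/andP; split; rewrite -lee_fin fineK //.
by apply: le_trans d_le _; rewrite lee_fin.
Qed.
End ReebDist.

Lemma reeb_dist_not_path_conn {R : realType} {X : topologicalType} (f : X -> R)
    {u v : X} : ~ path_conn (R:=R) u v -> reeb_dist f u v = +oo%E.
Proof.
move=> npc; rewrite /reeb_dist.
have -> : [set (path_height f p)%:E | p in [set p : R -> X | is_path p u v]] = set0.
  by apply/seteqP; split => // y [p pathp _]; exfalso; apply: npc; exists p.
exact: ereal_inf0.
Qed.

Section PathComponents.
Context {R : realType} {X : topologicalType}.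
Local Notation path_conn := (@path_conn R _).

Definition path_comp (x : X) : set X := [set y | path_conn x y].

Lemma path_comp_eq (x y : X) : path_comp x = path_comp y <-> path_conn x y.
Proof.
split=> [xy|pxy].
  by have : path_comp y y := path_conn_refl y; rewrite -xy.
apply/seteqP; split => z /=.
  by move=> pxz; apply: path_conn_trans (path_conn_sym pxy) pxz.
exact: path_conn_trans pxy.
Qed.

Lemma path_comp_in (x : X) : path_components R (path_comp x).
Proof. by exists x. Qed.

Definition comp_repr {C : set X} (hC : path_components R C) : X := s2val (cid2 hC).

Lemma comp_reprK (C : set X) (hC : path_components R C) : path_comp (comp_repr hC) = C.
Proof. by rewrite /comp_repr; case: cid2. Qed.

Lemma comp_repr_eq (C C' : set X) (hC : path_components R C) (hC' : path_components R C') :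
  C = C' -> comp_repr hC = comp_repr hC'.
Proof. by move=> CC'; subst C'; rewrite (Prop_irrelevance hC hC'). Qed.

End PathComponents.

Section PathComponentsCard.
Context {R : realType} {X Y : topologicalType}.
Local Notation path_conn := (@path_conn R _).
Local Notation path_comp := (@path_comp R _).

Lemma path_components_card_le (Phi : X -> Y) :
  continuous Phi ->
  (forall x x', path_conn (Phi x) (Phi x') -> path_conn x x') ->
  (@path_components R X #<= @path_components R Y)%card.
Proof.
move=> cPhi Phi_refl; apply/pcard_leP/injfunPex.
pose F (C : set X) := [set y | exists2 x, C x & path_conn (Phi x) y].
have F_comp x : F (path_comp x) = path_comp (Phi x).
  apply/seteqP; split => y /=.
    by move=> [x' xx' Phix'y]; exact: path_conn_trans (path_conn_map cPhi xx') Phix'y.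
  by move=> Phixy; exists x => //; exact: path_conn_refl.
exists F.
  by move=> _ [x _ <-]; rewrite -/(path_comp x) F_comp; exact: path_comp_in.
move=> _ _ /set_mem[x _ <-] /set_mem[x' _ <-].
rewrite -/(path_comp x) -/(path_comp x') !F_comp.
by move=> /path_comp_eq/Phi_refl/path_comp_eq.
Qed.
End PathComponentsCard.

Section Distortion.
Context {R : realType} {X Y : topologicalType} {f : X -> R} {g : Y -> R}.
Context {Bf Bg : R} (f_le : forall x, `|f x| <= Bf) (g_le : forall y, `|g y| <= Bg).
Context {Phi : X -> Y} {Psi : Y -> X}.
Local Notation path_conn := (@path_conn R _).
Local Notation graph x y := (y = Phi x \/ x = Psi y).

Lemma distortion_ge {x x' : X} {y y' : Y} : graph x y -> graph x' y' ->
  ((2^-1)%:E * eabsdiff (reeb_dist f x x') (reeb_dist g y y')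
     <= distortion f g Phi Psi)%E.
Proof. by move=> xy x'y'; apply: ereal_sup_ubound; exists ((x, y), (x', y')). Qed.

Lemma distortion_lt_pinfty_path_conn {x x' : X} {y y' : Y} :
  (distortion f g Phi Psi < +oo)%E -> graph x y -> graph x' y' ->
  path_conn x x' <-> path_conn y y'.
Proof.
move=> D_fin xy x'y'; have := distortion_ge xy x'y'.
have half_pinfty : ((2^-1)%:E * +oo)%E = +oo%E :> \bar R.
  by rewrite gt0_muley // lte_fin invr_gt0.
have [pxx'|npxx'] := pselect (path_conn x x');
  have [pyy'|npyy'] := pselect (path_conn y y') => //.
- have [r -> _] := reeb_dist_path_conn f_le pxx'.
  rewrite (reeb_dist_not_path_conn g npyy') /eabsdiff /= half_pinfty leye_eq.
  by move/eqP=> D_inf; move: D_fin; rewrite D_inf ltxx.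
- have [r -> _] := reeb_dist_path_conn g_le pyy'.
  rewrite (reeb_dist_not_path_conn f npxx') /eabsdiff /= half_pinfty leye_eq.
  by move/eqP=> D_inf; move: D_fin; rewrite D_inf ltxx.
Qed.

Lemma distortion_le_of_path_conn_graph :
  (forall x x' y y', graph x y -> graph x' y' -> path_conn x x' <-> path_conn y y') ->
  (distortion f g Phi Psi <= (Bf + Bg)%:E)%E.
Proof.
move=> graph_pc; apply/ereal_supP => _ [[[x y] [x' y']] [/= xy x'y'] <-] /=.
have [pxx'|npxx'] := pselect (path_conn x x').
  have [r -> /andP[r_ge0 r_le]] := reeb_dist_path_conn f_le pxx'.
  have [r' -> /andP[r'_ge0 r'_le]] :=
    reeb_dist_path_conn g_le ((graph_pc _ _ _ _ xy x'y').1 pxx').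
  rewrite -EFinM lee_fin.
  have : `|r - r'| <= 2 * (Bf + Bg) by rewrite ler_norml; apply/andP; split; lra.
  by lra.
have npyy' : ~ path_conn y y' by move=> /(graph_pc _ _ _ _ xy x'y').2.
rewrite (reeb_dist_not_path_conn f npxx') (reeb_dist_not_path_conn g npyy').
rewrite /eabsdiff /= mule0 lee_fin.
by have := f_le x; have := g_le y; rewrite !ler_norml => /andP[? ?] /andP[? ?]; lra.
Qed.
End Distortion.

Lemma sup_dist_le (R : realType) (Z : Type) (u v : Z -> R) (Bu Bv : R) :
  (forall z, `|u z| <= Bu) -> (forall z, `|v z| <= Bv) ->
  (sup_dist u v <= (Bu + Bv)%:E)%E.
Proof.
move=> u_le v_le; apply/ereal_supP => _ [z _ <-]; rewrite lee_fin.
have := u_le z; have := v_le z; rewrite !ler_norml => /andP[? ?] /andP[? ?].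
by apply/andP; split; lra.
Qed.

Local Open Scope ereal_scope.
Local Open Scope card_scope.

Section FiniteDistance.
Context {R : realType} {X Y : topologicalType} {f : X -> R} {g : Y -> R}.
Local Notation path_conn := (@path_conn R _).
Local Notation path_comp := (@path_comp R _).

Lemma card_path_components_eq_of_d_FD_lt_pinfty
    {Bf Bg : R} (f_le : forall x, (`|f x| <= Bf)%R) (g_le : forall y, (`|g y| <= Bg)%R) :
  d_FD f g < +oo -> @path_components R X #= @path_components R Y.
Proof.
move=> /ereal_inf_lt[_ [[Phi Psi] [/= cPhi cPsi] <-]].
rewrite /= !gt_max => /andP[D_fin _].
have graph_pc := distortion_lt_pinfty_path_conn f_le g_le D_fin.
apply: Cantor_Bernstein.
  apply: path_components_card_le cPhi _ => x x'.
  by move/(graph_pc x x' (Phi x) (Phi x') (or_introl erefl) (or_introl erefl)).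
apply: path_components_card_le cPsi _ => y y'.
by move/(graph_pc (Psi y) (Psi y') y y' (or_intror erefl) (or_intror erefl)).
Qed.

Lemma d_FD_lt_pinfty_of_card_path_components_eq :
  constructible_reeb f -> constructible_reeb g ->
  @path_components R X #= @path_components R Y -> d_FD f g < +oo.
Proof.
move=> cf cg /ppcard_eqP[sigma].
have [Bf f_le] := constructible_reeb_bounded cf.
have [Bg g_le] := constructible_reeb_bounded cg.
pose Phi x := comp_repr (@funS _ _ _ _ sigma _ (path_comp_in x)).
pose Psi y := comp_repr (@invS _ _ _ _ sigma _ (path_comp_in y)).
have graph_comp x y : y = Phi x \/ x = Psi y -> path_comp y = sigma (path_comp x).
  case=> ->; rewrite comp_reprK // invK //; exact/mem_set/path_comp_in.
have graph_pc x x' y y' : y = Phi x \/ x = Psi y -> y' = Phi x' \/ x' = Psi y' ->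
    path_conn x x' <-> path_conn y y'.
  move=> /graph_comp yx /graph_comp y'x'; rewrite -!path_comp_eq yx y'x'.
  split=> [-> //|]; apply: inj; exact/mem_set/path_comp_in.
have cPhi : continuous Phi.
  apply: (constructible_reeb_continuous_path_const cf) => x x' /path_comp_eq xx'.
  by apply: comp_repr_eq; rewrite xx'.
have cPsi : continuous Psi.
  apply: (constructible_reeb_continuous_path_const cg) => y y' /path_comp_eq yy'.
  by apply: comp_repr_eq; rewrite yy'.
apply: (@le_lt_trans _ _ (Bf + Bg)%:E); last exact: ltry.
apply: le_trans (ereal_inf_lbound _) _; first by exists (Phi, Psi).
rewrite /= !ge_max; apply/and3P; split.
- by apply: (distortion_le_of_path_conn_graph f_le g_le) => x x' y y'; exact: graph_pc.
- exact: sup_dist_le f_le (fun x => g_le (Phi x)).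
- exact: sup_dist_le (fun y => f_le (Psi y)) g_le.
Qed.
End FiniteDistance.

Theorem mainTheorem14 (R : realType) (X Y : topologicalType)
  (f : X -> R) (g : Y -> R) :
  constructible_reeb f -> constructible_reeb g ->
  (d_FD f g = +oo <-> ~ (@path_components R X #= @path_components R Y)).
Proof.
move=> cf cg; split.
  by move=> d_inf /(d_FD_lt_pinfty_of_card_path_components_eq cf cg); rewrite d_inf.
have [Bf f_le] := constructible_reeb_bounded cf.
have [Bg g_le] := constructible_reeb_bounded cg.
move=> card_neq; apply/eqP; rewrite -leye_eq leNgt; apply/negP => d_fin.
exact: card_neq (card_path_components_eq_of_d_FD_lt_pinfty f_le g_le d_fin).
Qed.
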